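(* Let $D$ be a rad-colon coherent domain. If $\{P_\alpha\}_{\alpha\in A}$ is a chain of prime ideals of $D$ and $P:=\bigcup_\alpha P_\alpha$, then $\bigcap_\alpha D_{P_\alpha}=D_P$.
   Context: An integral domain $D$ with quotient field $K$ is called rad-colon coherent if, for every $x\in K$, the radical of the conductor $(D:_Dx)$ is the radical of a finitely generated ideal. *)

From HB Require Import structures.
From mathcomp Require Import all_boot all_order all_algebra.
From mathcomp Require Import fraction.
Set Implicit Arguments. Unset Strict Implicit. Unset Printing Implicit Defensive.
Import GRing.Theory.
Local Open Scope ring_scope.

Definition toK (D : idomainType) (d : D) : {fraction D} := @FracField.tofrac D d.

Definition is_ideal (D : idomainType) (I : D -> Prop) : Prop :=
  [/\ I 0, (forall x y, I x -> I y -> I (x + y)) & (forall r x, I x -> I (r * x))].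

Definition is_prime_ideal (D : idomainType) (P : D -> Prop) : Prop :=
  [/\ is_ideal P, ~ P 1 & (forall a b, P (a * b) -> P a \/ P b)].

Definition radical (D : idomainType) (I : D -> Prop) : D -> Prop :=
  fun x => exists n : nat, I (x ^+ n).

Definition gen_ideal (D : idomainType) (s : seq D) : D -> Prop :=
  fun x => exists c : seq D, size c = size s /\
             x = \sum_(i < size s) c`_i * s`_i.

(* The conductor (D :_D x) = { d in D | d x in D } for x in K. *)
Definition conductor (D : idomainType) (x : {fraction D}) : D -> Prop :=
  fun d => exists e : D, toK d * x = toK e.

Definition rad_colon_coherent (D : idomainType) : Prop :=
  forall x : {fraction D}, exists s : seq D,
    forall d : D, radical (conductor x) d <-> radical (gen_ideal s) d.

Definition localization (D : idomainType) (P : D -> Prop) : {fraction D} -> Prop :=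
  fun x => exists a b : D, ~ P b /\ x = toK a / toK b.

From HB Require Import structures.
From mathcomp Require Import all_boot all_order all_algebra.
From mathcomp Require Import fraction.
From Stdlib Require Import Classical.
Set Implicit Arguments. Unset Strict Implicit. Unset Printing Implicit Defensive.
Local Open Scope ring_scope.
Import GRing.Theory.

(* If [x] is outside [D_P] for [P] the union of the chain, then [(D :_D x)]
   lies in [P].  Its radical is the radical of a finitely generated ideal [J];
   each of the finitely many generators of [J] lies in some [P_a], hence all
   of them lie in a single [P_a] of the chain, so [(D :_D x)] is contained in
   [rad J], hence in [P_a].  This contradicts [x \in D_(P_a)]. *)

Section Ideals.

Variable D : idomainType.
Implicit Types (Q : D -> Prop) (s : seq D).

Lemma localization_conductor Q (x : {fraction D}) :
  Q 0 -> localization Q x <-> exists2 d, conductor x d & ~ Q d.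
Proof.
move=> Q0; have nz d : ~ Q d -> toK d != 0.
  by move=> nQd; rewrite /toK tofrac_eq0; apply: contra_notN nQd => /eqP->.
split=> [[a [b [nQb ->]]] | [d [e dx] nQd]].
  by exists b => //; exists a; rewrite mulrC divfK ?nz.
by exists e, d; split=> //; rewrite -dx mulrC mulKf ?nz.
Qed.

Lemma radical_prime_ideal Q d : is_prime_ideal Q -> radical Q d -> Q d.
Proof.
case=> _ nQ1 Qprime [n]; elim: n => [|n IHn]; first by rewrite expr0 => /nQ1.
by rewrite exprS => /Qprime [].
Qed.

Lemma gen_ideal_mem s y : y \in s -> gen_ideal s y.
Proof.
move=> ys; have ilt : (index y s < size s)%N by rewrite index_mem.
pose i := Ordinal ilt.
exists (mkseq (fun j => (j == i)%:R) (size s)); split; first exact: size_mkseq.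
rewrite (bigD1 i) //= nth_mkseq // eqxx mul1r nth_index // big1 ?addr0 // => j ji.
have /negPf ji_nat : (j != i :> nat) := ji.
by rewrite nth_mkseq // ji_nat mul0r.
Qed.

Lemma gen_ideal_min Q s : is_ideal Q -> {in s, forall y, Q y} ->
  forall d, gen_ideal s d -> Q d.
Proof.
move=> [Q0 QD QM] sQ d [c [_ ->]]; apply: (big_ind Q) => // i _.
by apply/QM/sQ/mem_nth.
Qed.

Lemma conductor_sub_prime Q (x : {fraction D}) s :
  is_prime_ideal Q ->
  (forall d, radical (conductor x) d <-> radical (gen_ideal s) d) ->
  {in s, forall y, Q y} -> forall d, conductor x d -> Q d.
Proof.
move=> Qprime rad_eq sQ d xd; apply: radical_prime_ideal => //.
have [n sn] : radical (gen_ideal s) d by apply/rad_eq; exists 1%N.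
exists n; apply: gen_ideal_min sn => //; by case: Qprime.
Qed.

End Ideals.

Lemma chain_bound_seq (T : eqType) (A : Type) (P : A -> T -> Prop) (s : seq T) :
  inhabited A ->
  (forall a b, (forall t, P a t -> P b t) \/ (forall t, P b t -> P a t)) ->
  {in s, forall t, exists a, P a t} -> exists a, {in s, forall t, P a t}.
Proof.
move=> [a0] chain; elim: s => [|y s IHs] sP; first by exists a0.
have [a sPa] : exists a, {in s, forall t, P a t}.
  by apply: IHs => t ts; apply: sP; rewrite in_cons ts orbT.
have [b Pby] := sP y (mem_head y s).
case: (chain a b) => [Pab | Pba].
  by exists b => t; rewrite in_cons => /predU1P [-> | /sPa /Pab].
by exists a => t; rewrite in_cons => /predU1P [-> | /sPa //]; apply: Pba.
Qed.

Theorem proposition6p9 (D : idomainType) (A : Type) (P : A -> D -> Prop) :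
  rad_colon_coherent D ->
  inhabited A ->
  (forall a, is_prime_ideal (P a)) ->
  (forall a b, (forall d, P a d -> P b d) \/ (forall d, P b d -> P a d)) ->
  forall x : {fraction D},
    (forall a, localization (P a) x) <->
    localization (fun d => exists a, P a d) x.
Proof.
move=> rcc [a0] Pprime chain x; split=> [xloc | [c [d [nPd ->]]] a]; last first.
  by exists c, d; split=> // Pad; apply: nPd; exists a.
have P0 a : P a 0 by case: (Pprime a) => -[].
apply/localization_conductor; first by exists a0.
apply: NNPP => out; have sub_union d : conductor x d -> exists a, P a d.
  by move=> xd; apply: NNPP => nPd; apply: out; exists d.
have [s rad_eq] := rcc x.
have [a sPa] : exists a, {in s, forall y, P a y}.
  apply: chain_bound_seq => // [y ys].
  have [n xyn] : radical (conductor x) y.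
    by apply/rad_eq; exists 1%N; apply: gen_ideal_mem.
  have [a Payn] := sub_union _ xyn.
  by exists a; apply: radical_prime_ideal (Pprime a) _; exists n.
have [d xd nPad] := (localization_conductor x (P0 a)).1 (xloc a).
by apply: nPad; apply: conductor_sub_prime xd.
Qed.
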